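(* Let $n \ge 2$, $k \ge 1$ and $n_i, m_i \in \mathbb{Z}\setminus\{0\}$ for $1 \le i \le k$. If the group presented by $\mathcal{P}_n(n_1,\dots,n_k;m_1,\dots,m_k)$ is isomorphic to $Q_{4n}$, then the map $x \mapsto x$, $y \mapsto y$ induces a group isomorphism from the group presented by $\mathcal{P}_n(n_1,\dots,n_k;m_1,\dots,m_k)$ to $Q_{4n}$.
   Context: $Q_{4n} = \langle x, y \mid x^n y^{-2}, xyxy^{-1} \rangle$. With $n_{k+1} = 1 - \sum_{i=1}^k n_i$, $m_{k+1} = 1 - \sum_{i=1}^k m_i$, $\mathcal{P}_n(n_1,\dots,n_k;m_1,\dots,m_k) = \langle x, y \mid x^n y^{-2},\ x^{n_1} y x^{m_1} y^{-1} \cdots x^{n_{k+1}} y x^{m_{k+1}} y^{-1} \rangle$. *)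

From Stdlib Require Import ZArith List.
Import ListNotations.
Open Scope Z_scope.

Record Grp := MkGrp {
  gcar :> Type;
  gmul : gcar -> gcar -> gcar;
  ginv : gcar -> gcar;
  gone : gcar;
  gmulA : forall a b c, gmul a (gmul b c) = gmul (gmul a b) c;
  gmul1 : forall a, gmul gone a = a;
  gmulV : forall a, gmul (ginv a) a = gone
}.
Arguments gmul {g}.
Arguments ginv {g}.
Arguments gone {g}.

Definition is_hom {G H : Grp} (f : G -> H) : Prop :=
  forall a b : G, f (gmul a b) = gmul (f a) (f b).

Definition is_iso {G H : Grp} (f : G -> H) : Prop :=
  is_hom f /\ exists g : H -> G, (forall a, g (f a) = a) /\ (forall b, f (g b) = b).

Definition zpow {G : Grp} (g : G) (z : Z) : G :=
  match z with
  | Z0 => gone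
  | Zpos p => Nat.iter (Pos.to_nat p) (gmul g) gone
  | Zneg p => Nat.iter (Pos.to_nat p) (gmul (ginv g)) gone
  end.

(** A word in the generators x (false) and y (true): the list
    [(s1,e1); ...; (sr,er)] stands for s1^e1 * ... * sr^er. *)
Definition word := list (bool * Z).

Definition eval_word {G : Grp} (a b : G) (w : word) : G :=
  fold_right (fun (p : bool * Z) (acc : gcar G) => gmul (zpow (if fst p then b else a) (snd p)) acc) gone w.

Definition satisfies {G : Grp} (a b : G) (R : list word) : Prop :=
  Forall (fun w => eval_word a b w = gone) R.

Definition presents (G : Grp) (a b : G) (R : list word) : Prop :=
  satisfies a b R /\
  forall (H : Grp) (c d : H), satisfies c d R ->
    exists f : G -> H, is_hom f /\ f a = c /\ f b = d /\
      (forall g : G -> H, is_hom g -> g a = c -> g b = d -> forall z, g z = f z).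

Definition relQ (n : nat) : list word :=
  [ [(false, Z.of_nat n); (true, -2)] ;
    [(false, 1); (true, 1); (false, 1); (true, -1)] ].

Definition sumZ (l : list Z) : Z := fold_right Z.add 0 l.

(** Relators of P_n(n_1..n_k; m_1..m_k), with n_{k+1} = 1 - sum n_i,
    m_{k+1} = 1 - sum m_i:
    x^n y^{-2},  x^{n_1} y x^{m_1} y^{-1} ... x^{n_{k+1}} y x^{m_{k+1}} y^{-1}. *)
Definition relP (n : nat) (ns ms : list Z) : list word :=
  let ns' := ns ++ [1 - sumZ ns] in
  let ms' := ms ++ [1 - sumZ ms] in
  [ [(false, Z.of_nat n); (true, -2)] ;
    flat_map (fun p => [(false, fst p); (true, 1); (false, snd p); (true, -1)])
             (combine ns' ms') ].

(* The relations of P_n hold in Q_{4n}: there y conjugates x to x^{-1}, so each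
   block x^{n_i} y x^{m_i} y^{-1} equals x^{n_i - m_i}, and the exponents sum to
   zero.  Hence x |-> x, y |-> y is an epimorphism P -> Q_{4n}.  Every element of
   Q_{4n} is x^i y^j with 0 <= i < 2n and j in {0, 1}, so Q_{4n} is finite, and an
   epimorphism onto a finite group from a group isomorphic to it is injective.
   The relations of Q_{4n} then hold in P, and the presentation of Q_{4n}
   provides the inverse isomorphism. *)

From Stdlib Require Import ZArith List.
From Stdlib Require Import Lia FinFun Classical ProofIrrelevance.
Import ListNotations.
Open Scope Z_scope.

Section GroupTheory.
Variable G : Grp.
Implicit Types a b g x y : G.

Lemma mulgV a : gmul a (ginv a) = gone.
Proof.
  rewrite <- (gmul1 _ (gmul a (ginv a))), <- (gmulV _ (ginv a)) at 1.
  rewrite <- gmulA, (gmulA _ (ginv a) a (ginv a)), gmulV, gmul1.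
  apply gmulV.
Qed.

Lemma mulg1 a : gmul a gone = a.
Proof. rewrite <- (gmulV _ a), gmulA, mulgV, gmul1. reflexivity. Qed.

Lemma mulIg x a b : gmul a x = gmul b x -> a = b.
Proof.
  intro E. rewrite <- (mulg1 a), <- (mulg1 b), <- (mulgV x), !gmulA, E.
  reflexivity.
Qed.

Lemma mul_eq1_invl x y : gmul x y = gone -> x = ginv y.
Proof. intro E. apply (mulIg y). rewrite E, gmulV. reflexivity. Qed.

Lemma mul_eq1_invr x y : gmul x y = gone -> y = ginv x.
Proof.
  intro E. rewrite <- (gmul1 _ y), <- (gmulV _ x), <- gmulA, E, mulg1.
  reflexivity.
Qed.

Lemma invgK x : ginv (ginv x) = x.
Proof. symmetry. apply mul_eq1_invl, mulgV. Qed.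

Lemma zpow_succ g i : zpow g (Z.succ i) = gmul g (zpow g i).
Proof.
  destruct i as [|p|p]; [reflexivity| |].
  - replace (Z.succ (Zpos p)) with (Zpos (Pos.succ p)) by lia.
    unfold zpow. rewrite Pos2Nat.inj_succ. reflexivity.
  - destruct (Pos.eq_dec p 1) as [->|Hp].
    + simpl. rewrite gmulA, mulgV, gmul1. reflexivity.
    + replace (Z.succ (Zneg p)) with (Zneg (Pos.pred p)) by lia.
      rewrite <- (Pos.succ_pred p Hp) at 2.
      unfold zpow. rewrite Pos2Nat.inj_succ. simpl.
      rewrite gmulA, mulgV, gmul1. reflexivity.
Qed.

Lemma zpow_pred g i : zpow g (Z.pred i) = gmul (ginv g) (zpow g i).
Proof.
  rewrite <- (Z.succ_pred i) at 2.
  rewrite zpow_succ, gmulA, gmulV, gmul1. reflexivity.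
Qed.

Lemma zpowD g i j : zpow g (i + j) = gmul (zpow g i) (zpow g j).
Proof.
  revert i. apply Z.peano_ind.
  - simpl. rewrite gmul1. reflexivity.
  - intros i IH. rewrite Z.add_succ_l, !zpow_succ, IH, gmulA. reflexivity.
  - intros i IH. rewrite Z.add_pred_l, !zpow_pred, IH, gmulA. reflexivity.
Qed.

Lemma zpowN g i : zpow g (- i) = ginv (zpow g i).
Proof. apply mul_eq1_invl. rewrite <- zpowD, Z.add_opp_diag_l. reflexivity. Qed.

Lemma zpow1 g : zpow g 1 = g.
Proof. apply mulg1. Qed.

Lemma zpowN1 g : zpow g (-1) = ginv g.
Proof. apply mulg1. Qed.

Lemma zpow_invg g i : zpow (ginv g) i = zpow g (- i).
Proof.
  revert i. apply Z.peano_ind.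
  - reflexivity.
  - intros i IH. rewrite zpow_succ, IH, <- zpow_pred. f_equal. lia.
  - intros i IH. rewrite zpow_pred, IH, invgK, <- zpow_succ. f_equal. lia.
Qed.

Lemma zpowM_eq1 g m q : zpow g m = gone -> zpow g (m * q) = gone.
Proof.
  intro Hm. revert q. apply Z.peano_ind.
  - rewrite Z.mul_0_r. reflexivity.
  - intros q IH. rewrite Z.mul_succ_r, zpowD, IH, Hm, gmul1. reflexivity.
  - intros q IH. replace (m * Z.pred q) with (m * q + - m) by lia.
    rewrite zpowD, IH, zpowN, Hm, gmul1.
    symmetry. apply mul_eq1_invl, gmul1.
Qed.

Lemma conjg_hom g : is_hom (fun x => gmul g (gmul x (ginv g))).
Proof.
  intros x y. cbv beta.
  rewrite !gmulA, <- (gmulA _ _ (ginv g) g), gmulV, mulg1. reflexivity.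
Qed.

Lemma eval_word_app a b w1 w2 :
  eval_word a b (w1 ++ w2) = gmul (eval_word a b w1) (eval_word a b w2).
Proof.
  induction w1 as [|p w1 IH]; simpl.
  - rewrite gmul1. reflexivity.
  - rewrite IH, gmulA. reflexivity.
Qed.

End GroupTheory.

Section Homomorphisms.
Variables G H : Grp.
Variable f : G -> H.
Hypothesis hom_f : is_hom f.

Lemma hom1 : f gone = gone.
Proof. apply (mulIg _ (f gone)). rewrite <- hom_f, !gmul1. reflexivity. Qed.

Lemma homV x : f (ginv x) = ginv (f x).
Proof. apply mul_eq1_invl. rewrite <- hom_f, gmulV. apply hom1. Qed.

Lemma hom_zpow g i : f (zpow g i) = zpow (f g) i.
Proof.
  revert i. apply Z.peano_ind.
  - apply hom1.
  - intros i IH. rewrite !zpow_succ, hom_f, IH. reflexivity.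
  - intros i IH. rewrite !zpow_pred, hom_f, IH, homV. reflexivity.
Qed.

Lemma hom_eval_word a b w : f (eval_word a b w) = eval_word (f a) (f b) w.
Proof.
  induction w as [|[s e] w IH]; simpl.
  - apply hom1.
  - rewrite hom_f, IH, hom_zpow. destruct s; reflexivity.
Qed.

Lemma satisfies_of_injective_hom a b R :
  Injective f -> satisfies (f a) (f b) R -> satisfies a b R.
Proof.
  intros inj_f Hsat. eapply Forall_impl; [|exact Hsat].
  intros w Hw. apply inj_f. rewrite hom_eval_word, hom1. exact Hw.
Qed.

End Homomorphisms.

Lemma presents_hom_id (G : Grp) (a b : G) R (g : G -> G) :
  presents G a b R -> is_hom g -> g a = a -> g b = b -> forall z, g z = z.
Proof.
  intros [Hsat Huniv] hom_g ga gb z.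
  destruct (Huniv G a b Hsat) as [f0 [_ [_ [_ Huniq]]]].
  rewrite (Huniq g hom_g ga gb), (Huniq (fun x => x)); auto.
  intros x y. reflexivity.
Qed.

Lemma presents_hom_is_iso (G H : Grp) (a b : G) (c d : H) R R'
    (f : G -> H) (g : H -> G) :
  presents G a b R -> presents H c d R' ->
  is_hom f -> f a = c -> f b = d -> is_hom g -> g c = a -> g d = b ->
  is_iso f.
Proof.
  intros HG HH hom_f fa fb hom_g gc gd.
  split; [exact hom_f|]. exists g. split.
  - apply (presents_hom_id _ _ _ _ _ HG).
    + intros x y. rewrite hom_f, hom_g. reflexivity.
    + rewrite fa. exact gc.
    + rewrite fb. exact gd.
  - apply (presents_hom_id _ _ _ _ _ HH).
    + intros x y. rewrite hom_g, hom_f. reflexivity.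
    + rewrite gc. exact fa.
    + rewrite gd. exact fb.
Qed.

Section Subgroup.
Variable G : Grp.
Variable S : G -> Prop.
Hypothesis S1 : S gone.
Hypothesis SM : forall x y, S x -> S y -> S (gmul x y).
Hypothesis SV : forall x, S x -> S (ginv x).

Lemma sub_ext (u v : {x | S x}) : proj1_sig u = proj1_sig v -> u = v.
Proof.
  destruct u as [u Su], v as [v Sv]. simpl. intros ->. f_equal.
  apply proof_irrelevance.
Qed.

Definition subgroup : Grp.
Proof.
  refine (MkGrp {x | S x}
    (fun u v => exist _ (gmul (proj1_sig u) (proj1_sig v))
                  (SM _ _ (proj2_sig u) (proj2_sig v)))
    (fun u => exist _ (ginv (proj1_sig u)) (SV _ (proj2_sig u)))
    (exist _ gone S1) _ _ _);
  intros; apply sub_ext; simpl; auto using gmulA, gmul1, gmulV.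
Defined.

Lemma subgroup_val_hom : is_hom (fun u : subgroup => proj1_sig u).
Proof. intros u v. reflexivity. Qed.

(* Map G into S by the universal property; followed by the inclusion this map
   fixes a and b, hence is the identity of G. *)
Lemma presents_ind a b R : presents G a b R -> S a -> S b -> forall z, S z.
Proof.
  intros HG Sa Sb z.
  pose (a' := exist S a Sa : subgroup). pose (b' := exist S b Sb : subgroup).
  assert (Hsat : satisfies a' b' R).
  { apply (satisfies_of_injective_hom _ _ _ subgroup_val_hom).
    - intros u v. apply sub_ext.
    - exact (proj1 HG). }
  destruct (proj2 HG subgroup a' b' Hsat) as [r [hom_r [ra [rb _]]]].
  rewrite <- (presents_hom_id _ _ _ _ (fun x => proj1_sig (r x)) HG).
  - exact (proj2_sig (r z)).
  - intros x y. rewrite hom_r. reflexivity.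
  - rewrite ra. reflexivity.
  - rewrite rb. reflexivity.
Qed.

End Subgroup.

Lemma presents_hom_surjective (G H : Grp) (a b : G) (c d : H) R (f : G -> H) :
  presents H c d R -> is_hom f -> f a = c -> f b = d -> Surjective f.
Proof.
  intros HH hom_f fa fb z.
  refine (presents_ind H (fun z => exists x, f x = z) _ _ _ c d R HH _ _ z).
  - exists gone. apply (hom1 _ _ _ hom_f).
  - intros x y [x' <-] [y' <-]. exists (gmul x' y'). apply hom_f.
  - intros x [x' <-]. exists (ginv x'). apply (homV _ _ _ hom_f).
  - exists a. exact fa.
  - exists b. exact fb.
Qed.

Section Dicyclic.
Variable G : Grp.
Variables c d : G.
Variable N : Z.
Hypothesis d_square : gmul d d = zpow c N.
Hypothesis d_conj_c : gmul d (gmul c (ginv d)) = ginv c.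

Lemma d_conj_zpow k : gmul d (gmul (zpow c k) (ginv d)) = zpow c (- k).
Proof.
  rewrite (hom_zpow _ _ _ (conjg_hom _ d)), d_conj_c, zpow_invg. reflexivity.
Qed.

Lemma d_mul_zpow k : gmul d (zpow c k) = gmul (zpow c (- k)) d.
Proof. rewrite <- d_conj_zpow, <- !gmulA, gmulV, mulg1. reflexivity. Qed.

Lemma zpow_c_2N : zpow c (2 * N) = gone.
Proof.
  assert (E : zpow c (- N) = zpow c N).
  { rewrite <- d_conj_zpow, <- d_square, !gmulA, <- (gmulA _ _ d (ginv d)).
    rewrite mulgV, mulg1. reflexivity. }
  replace (2 * N) with (N + N) by lia.
  rewrite zpowD, <- E at 1. rewrite <- zpowD, Z.add_opp_diag_l. reflexivity.
Qed.

Definition cd (i : Z) (j : bool) : G := gmul (zpow c i) (if j then d else gone).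

Lemma cd_mul i j i' j' :
  gmul (cd i j) (cd i' j') =
  cd (i + (if j then - i' else i') + (if andb j j' then N else 0)) (xorb j j').
Proof.
  unfold cd. destruct j, j'; simpl; rewrite ?mulg1, ?Z.add_0_r, !zpowD.
  - rewrite <- d_square, <- !gmulA, (gmulA _ d), d_mul_zpow, !gmulA.
    reflexivity.
  - rewrite <- gmulA, d_mul_zpow, gmulA. reflexivity.
  - rewrite gmulA. reflexivity.
  - reflexivity.
Qed.

Lemma cd_inv i j : ginv (cd i j) = cd (if j then i - N else - i) j.
Proof.
  symmetry. apply mul_eq1_invl. rewrite cd_mul.
  replace (_ + _ + _) with 0 by (destruct j; simpl; lia).
  destruct j; simpl; apply mulg1.
Qed.

Lemma cd_mod i j : cd i j = cd (i mod (2 * N)) j.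
Proof.
  unfold cd. rewrite (Z_div_mod_eq_full i (2 * N)) at 1.
  rewrite zpowD, zpowM_eq1, gmul1 by exact zpow_c_2N. reflexivity.
Qed.

Lemma eval_conj_blocks (l : list (Z * Z)) :
  eval_word c d
    (flat_map (fun p => [(false, fst p); (true, 1); (false, snd p); (true, -1)]) l)
  = zpow c (sumZ (map fst l) - sumZ (map snd l)).
Proof.
  induction l as [|p l IH]; [reflexivity|].
  cbn [flat_map]. rewrite eval_word_app, IH. cbn -[zpow].
  rewrite mulg1, zpow1, zpowN1, d_conj_zpow, <- !zpowD.
  f_equal. unfold sumZ. simpl. lia.
Qed.

End Dicyclic.

Lemma relQ_relations (G : Grp) (c d : G) n :
  satisfies c d (relQ n) ->
  gmul d d = zpow c (Z.of_nat n) /\ gmul d (gmul c (ginv d)) = ginv c.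
Proof.
  intro Hsat. inversion_clear Hsat as [|? ? H1 Hsat']. inversion_clear Hsat' as [|? ? H2 _].
  cbn -[zpow] in H1, H2. rewrite mulg1 in H1. rewrite !zpow1, zpowN1, mulg1 in H2.
  split.
  - apply mul_eq1_invl in H1. rewrite H1, <- zpowN. simpl. rewrite mulg1.
    reflexivity.
  - apply mul_eq1_invr. exact H2.
Qed.

Lemma sumZ_app (l1 l2 : list Z) : sumZ (l1 ++ l2) = sumZ l1 + sumZ l2.
Proof. induction l1 as [|x l IH]; simpl; [reflexivity|]. rewrite IH. lia. Qed.

Lemma map_fst_combine {A B : Type} (l : list A) (l' : list B) :
  length l = length l' -> map fst (combine l l') = l.
Proof.
  revert l'. induction l as [|x l IH]; intros [|y l'] E; simpl in *;
    try discriminate; auto.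
  f_equal. apply IH. lia.
Qed.

Lemma map_snd_combine {A B : Type} (l : list A) (l' : list B) :
  length l = length l' -> map snd (combine l l') = l'.
Proof.
  revert l'. induction l as [|x l IH]; intros [|y l'] E; simpl in *;
    try discriminate; auto.
  f_equal. apply IH. lia.
Qed.

Lemma satisfies_relP_of_relQ (G : Grp) (c d : G) n ns ms :
  length ns = length ms -> satisfies c d (relQ n) -> satisfies c d (relP n ns ms).
Proof.
  intros Hlen Hsat.
  destruct (relQ_relations _ _ _ _ Hsat) as [_ d_conj_c].
  inversion_clear Hsat as [|? ? H1 _].
  constructor; [exact H1|]. constructor; [|constructor].
  assert (Hlen' : length (ns ++ [1 - sumZ ns]) = length (ms ++ [1 - sumZ ms])).
  { rewrite !length_app. simpl. lia. }
  rewrite (eval_conj_blocks _ _ _ d_conj_c), map_fst_combine, map_snd_combine,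
    !sumZ_app by exact Hlen'.
  replace (_ - _) with 0 by (unfold sumZ; cbn [fold_right]; lia). reflexivity.
Qed.

Lemma presents_relQ_finite (Q : Grp) (c d : Q) n :
  (0 < n)%nat -> presents Q c d (relQ n) -> Finite Q.
Proof.
  intros Hn HQ. set (N := Z.of_nat n).
  destruct (relQ_relations _ _ _ _ (proj1 HQ)) as [d_square d_conj_c].
  assert (Hcd : forall z, exists i j, z = cd _ c d i j).
  { intro z. refine (presents_ind Q (fun z => exists i j, z = cd _ c d i j)
                         _ _ _ c d (relQ n) HQ _ _ z).
    - exists 0, false. unfold cd. rewrite mulg1. reflexivity.
    - intros x y [i [j ->]] [i' [j' ->]]. rewrite (cd_mul _ _ _ _ d_square d_conj_c). eauto.
    - intros x [i [j ->]]. rewrite (cd_inv _ _ _ _ d_square d_conj_c). eauto.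
    - exists 1, false. unfold cd. rewrite zpow1, mulg1. reflexivity.
    - exists 0, true. unfold cd. simpl. rewrite gmul1. reflexivity. }
  exists (flat_map (fun k => [cd _ c d (Z.of_nat k) false; cd _ c d (Z.of_nat k) true])
                   (seq 0 (2 * n))).
  intro z. destruct (Hcd z) as [i [j ->]].
  rewrite (cd_mod _ _ _ N d_square d_conj_c).
  assert (Hr : 0 <= i mod (2 * N) < 2 * N) by (apply Z.mod_pos_bound; lia).
  apply in_flat_map. exists (Z.to_nat (i mod (2 * N))). split.
  - apply in_seq. lia.
  - rewrite Z2Nat.id by lia. destruct j; simpl; auto.
Qed.

(* Surjective endomorphisms of a finite set are injective; compose f with the
   left inverse of the embedding h to get one. *)
Lemma Surjective_Injective_finite {A B : Type} (h : A -> B) (h' : B -> A) :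
  (forall x, h' (h x) = x) -> Finite B ->
  forall f : A -> B, Surjective f -> Injective f.
Proof.
  intros hK finB f surj_f x y E.
  assert (inj : Injective (fun z => f (h' z))).
  { apply (Endo_Injective_Surjective finB); [intros u v; apply classic|].
    intro z. destruct (surj_f z) as [u <-]. exists (h u). rewrite hK. reflexivity. }
  rewrite <- (hK x), <- (hK y). f_equal. apply inj. rewrite !hK. exact E.
Qed.

Theorem corollary3p8 (n k : nat) (ns ms : list Z) :
  (2 <= n)%nat -> (1 <= k)%nat ->
  length ns = k -> length ms = k ->
  Forall (fun z => z <> 0%Z) ns -> Forall (fun z => z <> 0%Z) ms ->
  forall (P : Grp) (a b : P), presents P a b (relP n ns ms) ->
  forall (Q : Grp) (c d : Q), presents Q c d (relQ n) ->
  (exists f : P -> Q, is_iso f) ->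
  exists f : P -> Q, is_iso f /\ f a = c /\ f b = d.
Proof.
  intros Hn _ Hns Hms _ _ P a b HP Q c d HQ [h [_ [h' [hK _]]]].
  assert (Hlen : length ns = length ms) by congruence.
  destruct (proj2 HP Q c d (satisfies_relP_of_relQ _ _ _ _ _ _ Hlen (proj1 HQ)))
    as [f [hom_f [fa [fb _]]]].
  assert (inj_f : Injective f).
  { apply (Surjective_Injective_finite h h' hK).
    - apply (presents_relQ_finite _ c d n); [lia | exact HQ].
    - exact (presents_hom_surjective _ _ _ _ _ _ _ _ HQ hom_f fa fb). }
  assert (HsatP : satisfies a b (relQ n)).
  { apply (satisfies_of_injective_hom _ _ _ hom_f _ _ _ inj_f).
    rewrite fa, fb. exact (proj1 HQ). }
  destruct (proj2 HQ P a b HsatP) as [g [hom_g [gc [gd _]]]].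
  exists f. split; [|split; assumption].
  exact (presents_hom_is_iso _ _ _ _ _ _ _ _ _ _ HP HQ hom_f fa fb hom_g gc gd).
Qed.
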